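(* Let $R$ be a (not necessarily commutative) Noetherian positively graded connected $\mathbb{K}$-algebra generated in degree $1$, let $P$ be a homogeneous prime ideal of $R$ with $P\neq R_+$, and let $M$ be a graded right $R$-module. Then $\mathrm{Hom}_{Gr(R)}(M,E^g(R/P))=0$ if and only if $\overline{\mathrm{Hom}}(M,E^g(R/P))=0$.
   Context: $\mathbb{K}$ is a field; connected means $R_0=\mathbb{K}$; $R_+=\bigoplus_{i\geq1}R_i$. $Gr(R)$ is the category of graded right $R$-modules with degree-preserving maps, $E^g$ the injective envelope in $Gr(R)$, and $\overline{\mathrm{Hom}}(M,N)=\bigoplus_{i\in\mathbb{Z}}\mathrm{Hom}_{Gr(R)}(M,N(i))$ with $N(i)$ the grading shift. *)

From HB Require Import structures.
From mathcomp Require Import all_boot all_order all_algebra.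
Set Implicit Arguments. Unset Strict Implicit. Unset Printing Implicit Defensive.
Import Order.TTheory GRing.Theory Num.Theory.
Local Open Scope ring_scope.

(* Graded algebra data: K a field, R a K-algebra (not necessarily
   commutative; scalars central), Rdeg i = the K-subspace R_i, i : nat. *)
Section Graded.
Variables (K : fieldType) (R : algType K) (Rdeg : nat -> R -> Prop).

Definition positively_graded : Prop :=
  (forall i, Rdeg i 0) /\
  (forall i a b, Rdeg i a -> Rdeg i b -> Rdeg i (a + b)) /\
  (forall i (k : K) a, Rdeg i a -> Rdeg i (k *: a)) /\
  (forall i j a b, Rdeg i a -> Rdeg j b -> Rdeg (i + j)%N (a * b)) /\
  (forall a, exists (s : seq nat) (x : nat -> R),
       uniq s /\ (forall i, Rdeg i (x i)) /\ a = \sum_(i <- s) x i) /\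
  (forall (s : seq nat) (x : nat -> R), uniq s -> (forall i, Rdeg i (x i)) ->
       \sum_(i <- s) x i = 0 -> forall i, i \in s -> x i = 0).

Definition connected : Prop := forall a, Rdeg 0 a <-> exists k : K, a = k%:A.

Definition generated_in_degree1 : Prop :=
  forall S : R -> Prop,
    S 1 -> (forall a b, S a -> S b -> S (a + b)) ->
    (forall (k : K) a, S a -> S (k *: a)) ->
    (forall a b, S a -> S b -> S (a * b)) ->
    (forall a, Rdeg 1 a -> S a) -> forall a, S a.

Definition right_ideal (I : R -> Prop) : Prop :=
  I 0 /\ (forall a b, I a -> I b -> I (a + b)) /\ (forall a r, I a -> I (a * r)).
Definition left_ideal (I : R -> Prop) : Prop :=
  I 0 /\ (forall a b, I a -> I b -> I (a + b)) /\ (forall a r, I a -> I (r * a)).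
Definition two_sided_ideal (I : R -> Prop) : Prop := right_ideal I /\ left_ideal I.

Definition acc (isId : (R -> Prop) -> Prop) : Prop :=
  forall I : nat -> R -> Prop, (forall n, isId (I n)) ->
    (forall n a, I n a -> I n.+1 a) ->
    exists N, forall n, (N <= n)%N -> forall a, I n a -> I N a.

Definition noetherian : Prop := acc right_ideal /\ acc left_ideal.

Definition homogeneous_ideal (P : R -> Prop) : Prop :=
  two_sided_ideal P /\
  forall (s : seq nat) (x : nat -> R), uniq s -> (forall i, Rdeg i (x i)) ->
    P (\sum_(i <- s) x i) -> forall i, i \in s -> P (x i).

Definition prime_ideal (P : R -> Prop) : Prop :=
  two_sided_ideal P /\ (exists a, ~ P a) /\
  forall I J : R -> Prop, two_sided_ideal I -> two_sided_ideal J ->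
    (forall a b, I a -> J b -> P (a * b)) ->
    (forall a, I a -> P a) \/ (forall a, J a -> P a).

Definition Rplus (a : R) : Prop :=
  exists (s : seq nat) (x : nat -> R),
    uniq s /\ (0%N \notin s) /\ (forall i, Rdeg i (x i)) /\ a = \sum_(i <- s) x i.

Record grmod := GrMod {
  gm_car :> zmodType;
  gm_act : gm_car -> R -> gm_car;
  gm_deg : int -> gm_car -> Prop;
  gm_act1 : forall m, gm_act m 1 = m;
  gm_actA : forall m a b, gm_act (gm_act m a) b = gm_act m (a * b);
  gm_actDl : forall m n a, gm_act (m + n) a = gm_act m a + gm_act n a;
  gm_actDr : forall m a b, gm_act m (a + b) = gm_act m a + gm_act m b;
  gm_deg0 : forall j, gm_deg j 0;
  gm_degB : forall j m n, gm_deg j m -> gm_deg j n -> gm_deg j (m - n);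
  gm_deg_act : forall i j a m, Rdeg i a -> gm_deg j m -> gm_deg (j + i%:Z) (gm_act m a);
  gm_decomp : forall m, exists (s : seq int) (x : int -> gm_car),
       uniq s /\ (forall j, gm_deg j (x j)) /\ m = \sum_(j <- s) x j;
  gm_indep : forall (s : seq int) (x : int -> gm_car), uniq s ->
       (forall j, gm_deg j (x j)) -> \sum_(j <- s) x j = 0 ->
       forall j, j \in s -> x j = 0
}.
Arguments gm_deg : clear implicits.
Arguments gm_act : clear implicits.


(* Hom_{Gr(R)}(M, N(i)): R-linear maps f with f(M_j) <= N(i)_j = N_{j+i} *)
Record grhom (M N : grmod) (i : int) := GrHom {
  hfun :> M -> N;
  hfunD : forall x y, hfun (x + y) = hfun x + hfun y;
  hfunR : forall x a, hfun (gm_act M x a) = gm_act N (hfun x) a;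
  hfun_deg : forall j x, gm_deg M j x -> gm_deg N (j + i) (hfun x)
}.
Arguments gm_deg : clear implicits.
Arguments gm_act : clear implicits.


Definition GrHom_zero (M N : grmod) : Prop :=
  forall (f : grhom M N 0) (m : M), f m = 0.

(* \bar{Hom}(M, N) = (+)_i Hom_{Gr(R)}(M, N(i)) = 0 *)
Definition HomBar_zero (M N : grmod) : Prop :=
  forall (i : int) (f : grhom M N i) (m : M), f m = 0.

Definition gr_injective (E : grmod) : Prop :=
  forall (A B : grmod) (f : grhom A B 0), injective f ->
    forall g : grhom A E 0, exists h : grhom B E 0, forall a, h (f a) = g a.

Definition gr_submodule (M : grmod) (S : M -> Prop) : Prop :=
  S 0 /\ (forall m n, S m -> S n -> S (m - n)) /\
  (forall m a, S m -> S (gm_act M m a)) /\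
  forall (s : seq int) (x : int -> M), uniq s -> (forall j, gm_deg M j (x j)) ->
    S (\sum_(j <- s) x j) -> forall j, j \in s -> S (x j).

(* E^g(Q): E injective in Gr(R), iota : Q -> E a monomorphism in Gr(R)
   which is essential (every nonzero graded submodule of E meets its image) *)
Definition gr_injective_envelope (Q E : grmod) (iota : grhom Q E 0) : Prop :=
  injective iota /\ gr_injective E /\
  forall S : E -> Prop, gr_submodule S -> (exists e, S e /\ e <> 0) ->
    exists q, S (iota q) /\ iota q <> 0.

(* Q is (isomorphic in Gr(R) to) R/P: pi : R_R -> Q is a surjective
   degree-preserving R-linear map with kernel P *)
Definition is_quotient_by (P : R -> Prop) (Q : grmod) (pi : R -> Q) : Prop :=
  (forall a b, pi (a + b) = pi a + pi b) /\
  (forall a b, pi (a * b) = gm_act Q (pi a) b) /\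
  (forall i a, Rdeg i a -> gm_deg Q i%:Z (pi a)) /\
  (forall q, exists a, pi a = q) /\
  (forall a, pi a = 0 <-> P a).

End Graded.

(* Let Z(i) say that some graded map M -> E(i) is nonzero.  Since R/P is
   essential in E, the image of such a map contains the class of a homogeneous
   t outside P.  Graded injectivity of E extends any map xR -> E, x s |-> y s,
   between homogeneous elements with ann(x) <= ann(y) to an endomorphism of E
   of degree deg y - deg x.  With x = 1 and y in R_1 such that y t R is not in
   P (generation in degree 1 and P <> R_+) this gives Z(i) -> Z(i+1); with
   x = t v a and y = a, where a has a maximal right annihilator modulo P among
   its left multiples (Noetherianity) and v is homogeneous of positive degree,
   it gives Z(i) -> Z(i-D) for some D > 0.  Together these reach Z(0). *)

From HB Require Import structures.
From mathcomp Require Import all_boot all_order all_algebra.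
From mathcomp Require Import zify boolp.
Set Implicit Arguments. Unset Strict Implicit. Unset Printing Implicit Defensive.
Import GRing.Theory.
Local Open Scope ring_scope.

Lemma sum_by_degree (V : nmodType) (I D : eqType) (deg : I -> D)
    (L : seq D) (l : seq I) (F : I -> V) :
  uniq L -> {subset map deg l <= L} ->
  \sum_(e <- L) \sum_(i <- l | deg i == e) F i = \sum_(i <- l) F i.
Proof.
move=> uL lL; rewrite (exchange_big_dep xpredT) //= big_seq [RHS]big_seq.
apply: eq_bigr => i il; rewrite -big_filter.
have -> : [seq e <- L | deg i == e] = [:: deg i].
  rewrite -(filter_pred1_uniq uL (lL _ (map_f _ il))).
  by apply: eq_filter => e; rewrite /= eq_sym.
by rewrite big_seq1.
Qed.

HB.instance Definition _ (V : zmodType) (S : zmodClosed V) :=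
  [SubChoice_isSubZmodule of {x : V | x \in S} by <:].

Lemma grhom_zmod_morphism (K : fieldType) (R : algType K) (Rdeg : nat -> R -> Prop)
    (G H : grmod Rdeg) i (f : grhom G H i) : zmod_morphism f.
Proof.
move=> x y; have -> : f x = f (x - y) + f y by rewrite -hfunD subrK.
by rewrite addrK.
Qed.

HB.instance Definition _ (K : fieldType) (R : algType K) (Rdeg : nat -> R -> Prop)
    (G H : grmod Rdeg) i (f : grhom G H i) :=
  GRing.isZmodMorphism.Build G H (@hfun _ _ _ G H i f) (grhom_zmod_morphism f).

Lemma gm_act_zmod_morphism (K : fieldType) (R : algType K) (Rdeg : nat -> R -> Prop)
    (G : grmod Rdeg) (x : G) : zmod_morphism (gm_act x).
Proof.
move=> a b; have -> : gm_act x a = gm_act x (a - b) + gm_act x b.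
  by rewrite -gm_actDr subrK.
by rewrite addrK.
Qed.

HB.instance Definition _ (K : fieldType) (R : algType K) (Rdeg : nat -> R -> Prop)
    (G : grmod Rdeg) (x : G) :=
  GRing.isZmodMorphism.Build R G (@gm_act _ _ _ G x) (gm_act_zmod_morphism x).

Section GradedModules.
Variables (K : fieldType) (R : algType K) (Rdeg : nat -> R -> Prop).
Implicit Types (G H : grmod Rdeg).

Lemma gm_degD G j (x y : G) : gm_deg j x -> gm_deg j y -> gm_deg j (x + y).
Proof.
move=> hx hy; have -> : x + y = x - (0 - y) by rewrite sub0r opprK.
by apply: gm_degB => //; apply: gm_degB => //; apply: gm_deg0.
Qed.

Lemma gm_deg_sum G j (I : Type) (l : seq I) (p : pred I) (F : I -> G) :
  (forall i, p i -> gm_deg j (F i)) -> gm_deg j (\sum_(i <- l | p i) F i).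
Proof. by move=> hF; apply: big_ind => //; [apply: gm_deg0 | apply: gm_degD]. Qed.

Lemma gm_components_eq G (I J : eqType) (dI : I -> int) (dJ : J -> int)
    (l1 : seq I) (l2 : seq J) (y1 : I -> G) (y2 : J -> G) :
  uniq l1 -> {in l1 &, injective dI} ->
  (forall i, gm_deg (dI i) (y1 i)) -> (forall j, gm_deg (dJ j) (y2 j)) ->
  \sum_(i <- l1) y1 i = \sum_(j <- l2) y2 j ->
  forall i, i \in l1 -> y1 i = \sum_(j <- l2 | dJ j == dI i) y2 j.
Proof.
move=> u1 inj d1 d2 e12 i il.
set L := undup (map dI l1 ++ map dJ l2).
pose z d := \sum_(i <- l1 | dI i == d) y1 i - \sum_(j <- l2 | dJ j == d) y2 j.
have dz d : gm_deg d (z d).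
  by apply: gm_degB; apply: gm_deg_sum => k /eqP <-.
have z0 : \sum_(d <- L) z d = 0.
  rewrite sumrB !sum_by_degree ?undup_uniq ?e12 ?subrr // => d hd;
  by rewrite mem_undup mem_cat hd ?orbT.
move: (gm_indep (undup_uniq _) dz z0); rewrite -/L => /(_ (dI i)).
rewrite mem_undup mem_cat map_f // => /(_ isT) /eqP; rewrite subr_eq0 => /eqP <-.
rewrite -big_filter.
have -> : [seq k <- l1 | dI k == dI i] = [:: i].
  rewrite -(filter_pred1_uniq u1 il); apply: eq_in_filter => k kl.
  by apply/eqP/eqP => [/inj -> | ->].
by rewrite big_seq1.
Qed.

Lemma gr_submodule_sum G (S : G -> Prop) (I : Type) (l : seq I) (p : pred I)
    (F : I -> G) :
  gr_submodule S -> (forall i, p i -> S (F i)) -> S (\sum_(i <- l | p i) F i).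
Proof.
move=> [S0 [SB _]] SF; apply: big_ind => // x y Sx Sy.
have -> : x + y = x - (0 - y) by rewrite sub0r opprK.
by apply: (SB) => //; apply: SB.
Qed.

Lemma gr_submodule_components G (S : G -> Prop) (I : eqType) (d : I -> int)
    (l : seq I) (y : I -> G) :
  gr_submodule S -> uniq l -> {in l &, injective d} -> (forall i, gm_deg (d i) (y i)) ->
  S (\sum_(i <- l) y i) -> forall i, i \in l -> S (y i).
Proof.
move=> HS ul inj dy Sy i il.
have [s [x [us [dx ex]]]] := gm_decomp (\sum_(i <- l) y i).
have Sx j : j \in s -> S (x j).
  by case: HS => _ [_ [_ Scomp]]; apply: Scomp => //; rewrite -ex.
rewrite (gm_components_eq (dJ := id) ul inj dy dx ex il) big_seq_cond.
by apply: gr_submodule_sum => // j /andP [/Sx].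
Qed.

Lemma gr_submodule_image G H i (f : grhom G H i) :
  gr_submodule (fun y => exists x, f x = y).
Proof.
split; first by exists 0; rewrite raddf0.
split; first by move=> _ _ [x1 <-] [x2 <-]; exists (x1 - x2); rewrite raddfB.
split; first by move=> _ a [x <-]; exists (gm_act x a); rewrite hfunR.
move=> s y us dy [x ex] j js.
have [t [z [ut [dz ez]]]] := gm_decomp x.
have ey : \sum_(j <- s) y j = \sum_(k <- t) f (z k) by rewrite -ex ez raddf_sum.
have dfz k : gm_deg (k + i) (f (z k)) by apply: hfun_deg.
rewrite (gm_components_eq (dI := id) us (in2W (@inj_id _)) dy dfz ey js) -raddf_sum.
by eexists.
Qed.

Definition grhom_comp (A B C : grmod Rdeg) i l (f : grhom A B i) (g : grhom B C l) :
  grhom A C (i + l).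
Proof.
refine (@GrHom _ _ _ A C (i + l) (fun x => g (f x)) _ _ _).
- by move=> x y; rewrite !raddfD.
- by move=> x a; rewrite !hfunR.
- by move=> j x hx; rewrite addrA; do 2!apply: hfun_deg.
Defined.

Section Shift.
Variables (G : grmod Rdeg) (k : int).

Definition shift_deg (j : int) (x : G) := gm_deg (j + k) x.

Lemma shift_deg_act i j a (x : G) :
  Rdeg i a -> shift_deg j x -> shift_deg (j + i%:Z) (gm_act x a).
Proof. by move=> ha hx; rewrite /shift_deg addrAC; apply: gm_deg_act. Qed.

Lemma shift_decomp (x : G) : exists (s : seq int) (y : int -> G),
  uniq s /\ (forall j, shift_deg j (y j)) /\ x = \sum_(j <- s) y j.
Proof.
have [s [y [us [dy ->]]]] := gm_decomp x.
exists [seq j - k | j <- s], (fun j => y (j + k)); split.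
  by rewrite map_inj_uniq // => a b /addIr.
split=> [j|]; first exact: dy.
by rewrite big_map; under [RHS]eq_bigr do rewrite subrK.
Qed.

Lemma shift_indep (s : seq int) (y : int -> G) : uniq s ->
  (forall j, shift_deg j (y j)) -> \sum_(j <- s) y j = 0 -> forall j, j \in s -> y j = 0.
Proof.
move=> us dy y0 j js; rewrite -[j](addrK k).
apply: (@gm_indep _ _ _ G [seq i + k | i <- s] (fun i => y (i - k))).
- by rewrite map_inj_uniq // => a b /addIr.
- by move=> i; rewrite -[i in gm_deg i](subrK k); apply: dy.
- by rewrite big_map; under eq_bigr do rewrite addrK.
- exact: map_f.
Qed.

Definition shift : grmod Rdeg :=
  GrMod (@gm_act1 _ _ _ G) (@gm_actA _ _ _ G) (@gm_actDl _ _ _ G) (@gm_actDr _ _ _ G)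
    (fun j => @gm_deg0 _ _ _ G (j + k)) (fun j => @gm_degB _ _ _ G (j + k))
    shift_deg_act shift_decomp shift_indep.

End Shift.

Definition shift_grhom G H k (f : grhom G H 0) : grhom (shift G k) (shift H k) 0.
Proof.
refine (@GrHom _ _ _ (shift G k) (shift H k) 0 f (hfunD f) (hfunR f) _).
by move=> j x /= /(hfun_deg f); rewrite !addr0.
Defined.

Definition grhom_to_shift G H i (f : grhom G H i) : grhom (shift G (- i)) H 0.
Proof.
refine (@GrHom _ _ _ (shift G (- i)) H 0 f (hfunD f) (hfunR f) _).
by move=> j x /= /(hfun_deg f); rewrite addr0 subrK.
Defined.

Definition grhom_of_shift G H i (f : grhom (shift G (- i)) H 0) : grhom G H i.
Proof.
refine (@GrHom _ _ _ G H i f (hfunD f) (hfunR f) _).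
move=> j x hx; rewrite -[j + i]addr0; apply: (hfun_deg f).
by rewrite /= /shift_deg addrK.
Defined.

(* Injectivity is only postulated for degree-preserving maps; shifting reduces
   the general case to it. *)
Lemma gr_injective_extend (A B E : grmod Rdeg) i (f : grhom A B 0) (g : grhom A E i) :
  gr_injective E -> injective f -> exists h : grhom B E i, forall a, h (f a) = g a.
Proof.
move=> HE finj.
have [h hfg] := HE _ _ (shift_grhom (- i) f) finj (grhom_to_shift g).
by exists (grhom_of_shift h).
Qed.

Section SubModule.
Variables (G : grmod Rdeg) (S : G -> Prop).
Hypothesis HS : gr_submodule S.

Definition submod_pred : pred G := fun x => `[< S x >].

Lemma submod_pred_zmod_closed : zmod_closed submod_pred.
Proof.
case: HS => S0 [SB _]; split; first exact/asboolP.
by move=> x y /asboolP Sx /asboolP Sy; apply/asboolP; apply: SB.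
Qed.

HB.instance Definition _ :=
  GRing.isZmodClosed.Build G submod_pred submod_pred_zmod_closed.

Definition submod_type := {x : G | x \in submod_pred}.

Lemma submod_act_subproof (x : submod_type) a : gm_act (val x) a \in submod_pred.
Proof. by case: HS (valP x) => _ [_ [Sact _]] /asboolP Sx; apply/asboolP/Sact. Qed.

Definition submod_act (x : submod_type) a : submod_type :=
  exist _ (gm_act (val x) a) (submod_act_subproof x a).

Definition submod_deg (j : int) (x : submod_type) := gm_deg j (val x).

Lemma submod_decomp (x : submod_type) : exists (s : seq int) (y : int -> submod_type),
  uniq s /\ (forall j, submod_deg j (y j)) /\ x = \sum_(j <- s) y j.
Proof.
have [s [y [us [dy ey]]]] := gm_decomp (val x).
have Sy j : j \in s -> y j \in submod_pred.
  move=> js; apply/asboolP.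
  apply: (gr_submodule_components (d := id) HS us (in2W (@inj_id _)) dy) => //.
  by rewrite -ey; apply/asboolP; exact: (valP x).
exists s, (fun j => insubd 0 (y j)); split => //; split.
  by move=> j; rewrite /submod_deg val_insubd; case: ifP => // _; apply: gm_deg0.
apply: val_inj; rewrite raddf_sum ey; apply: eq_big_seq => j js.
by rewrite /= val_insubd Sy.
Qed.

Lemma submod_indep (s : seq int) (y : int -> submod_type) : uniq s ->
  (forall j, submod_deg j (y j)) -> \sum_(j <- s) y j = 0 -> forall j, j \in s -> y j = 0.
Proof.
move=> us dy y0 j js; apply: val_inj.
apply: (gm_indep (s := s) (x := fun j => val (y j))) => //.
by have := congr1 val y0; rewrite raddf_sum => ->.
Qed.

Lemma submod_act1 x : submod_act x 1 = x.
Proof. by apply: val_inj; rewrite /= gm_act1. Qed.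

Lemma submod_actA x a b : submod_act (submod_act x a) b = submod_act x (a * b).
Proof. by apply: val_inj; rewrite /= gm_actA. Qed.

Lemma submod_actDl x y a : submod_act (x + y) a = submod_act x a + submod_act y a.
Proof. by apply: val_inj; rewrite /= gm_actDl. Qed.

Lemma submod_actDr x a b : submod_act x (a + b) = submod_act x a + submod_act x b.
Proof. by apply: val_inj; rewrite /= gm_actDr. Qed.

Definition subgrmod : grmod Rdeg :=
  @GrMod _ _ Rdeg submod_type submod_act submod_deg
    submod_act1 submod_actA submod_actDl submod_actDr
    (fun j => @gm_deg0 _ _ _ G j) (fun j x y => @gm_degB _ _ _ G j (val x) (val y))
    (fun i j a x => @gm_deg_act _ _ _ G i j a (val x)) submod_decomp submod_indep.

Definition subgrmod_incl : grhom subgrmod G 0.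
Proof.
refine (@GrHom _ _ _ subgrmod G 0 val (fun x y => erefl) (fun x a => erefl) _).
by move=> j x; rewrite addr0.
Defined.

Lemma subgrmod_incl_inj : injective subgrmod_incl.
Proof. exact: val_inj. Qed.

Lemma subgrmod_inclP (c : subgrmod) : S (subgrmod_incl c).
Proof. exact/asboolP/(valP c). Qed.

Lemma subgrmod_incl_onto x : S x -> exists c : subgrmod, subgrmod_incl c = x.
Proof. by move=> Sx; exists (exist _ x (asboolT Sx)). Qed.

End SubModule.

End GradedModules.

Section CyclicExtension.
Variables (K : fieldType) (R : algType K) (Rdeg : nat -> R -> Prop).
Hypothesis Hgr : positively_graded Rdeg.

Lemma Rdeg_decomp a : exists (s : seq nat) (x : nat -> R),
  uniq s /\ (forall i, Rdeg i (x i)) /\ a = \sum_(i <- s) x i.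
Proof. by case: Hgr => _ [_ [_ [_ [h _]]]]. Qed.

Lemma gr_submodule_cyclic (G : grmod Rdeg) (x : G) dx :
  gm_deg dx x -> gr_submodule (fun y => exists s, y = gm_act x s).
Proof.
move=> hx; split; first by exists 0; rewrite raddf0.
split; first by move=> _ _ [s1 ->] [s2 ->]; exists (s1 - s2); rewrite raddfB.
split; first by move=> _ a [s ->]; exists (s * a); rewrite gm_actA.
move=> l y ul dy [s ey] j jl.
have [t [z [ut [dz ez]]]] := Rdeg_decomp s.
have dxz n : gm_deg (dx + n%:Z) (gm_act x (z n)) by apply: gm_deg_act.
have eyz : \sum_(j <- l) y j = \sum_(n <- t) gm_act x (z n) by rewrite ey ez raddf_sum.
rewrite (gm_components_eq (dI := id) ul (in2W (@inj_id _)) dy dxz eyz jl) -raddf_sum.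
by eexists.
Qed.

Lemma gm_act_deg_transfer (G H : grmod Rdeg) (x : G) (y : H) dx dy s j :
  gm_deg dx x -> gm_deg dy y -> (forall s, gm_act x s = 0 -> gm_act y s = 0) ->
  gm_deg j (gm_act x s) -> gm_deg (j + (dy - dx)) (gm_act y s).
Proof.
move=> hx hy ann hxs.
have [t [z [ut [dz ez]]]] := Rdeg_decomp s.
have dxz n : gm_deg (dx + n%:Z) (gm_act x (z n)) by apply: gm_deg_act.
have x_off n : n \in t -> dx + n%:Z != j -> gm_act x (z n) = 0.
  move=> nt nj; have eyz : \sum_(m <- t) gm_act x (z m) = \sum_(k <- [:: j]) gm_act x s.
    by rewrite big_seq1 ez raddf_sum.
  have inj : {in t &, injective (fun n : nat => dx + n%:Z)} by move=> m1 m2 _ _ /addrI [].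
  rewrite (gm_components_eq (dJ := fun=> j) ut inj dxz (fun=> hxs) eyz nt).
  by rewrite big_cons big_nil eq_sym (negbTE nj).
rewrite ez raddf_sum big_seq; apply: gm_deg_sum => n nt.
have [<-|nj] := eqVneq (dx + n%:Z) j; last by rewrite /= ann ?x_off //; apply: gm_deg0.
by rewrite addrC addrA subrK; apply: gm_deg_act.
Qed.

Lemma gr_injective_cyclic_extend (A E : grmod Rdeg) (x : A) (y : E) dx dy :
  gr_injective E -> gm_deg dx x -> gm_deg dy y ->
  (forall s, gm_act x s = 0 -> gm_act y s = 0) ->
  exists h : grhom A E (dy - dx), forall s, h (gm_act x s) = gm_act y s.
Proof.
move=> HE hx hy ann.
have HC := gr_submodule_cyclic hx.
pose incl := subgrmod_incl HC.
have [sel selP] : {sel : subgrmod HC -> R & forall c, incl c = gm_act x (sel c)}.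
  apply: (choice (P := fun c s => incl c = gm_act x s)) => c.
  by have [s hs] := subgrmod_inclP c; exists s.
have sel_eq c s : incl c = gm_act x s -> gm_act y (sel c) = gm_act y s.
  move=> hc; apply/eqP; rewrite -subr_eq0 -raddfB; apply/eqP/ann.
  by rewrite raddfB /= -selP hc subrr.
have phiD c1 c2 : gm_act y (sel (c1 + c2)) = gm_act y (sel c1) + gm_act y (sel c2).
  by rewrite -gm_actDr; apply: sel_eq; rewrite hfunD !selP gm_actDr.
have phiR c a : gm_act y (sel (gm_act c a)) = gm_act (gm_act y (sel c)) a.
  by rewrite gm_actA; apply: sel_eq; rewrite hfunR selP gm_actA.
have phi_deg j c : gm_deg j c -> gm_deg (j + (dy - dx)) (gm_act y (sel c)).
  by move=> hc; apply: (gm_act_deg_transfer hx hy ann); rewrite -selP.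
pose phi := @GrHom _ _ _ (subgrmod HC) E (dy - dx) _ phiD phiR phi_deg.
have [h hh] := gr_injective_extend phi HE (@subgrmod_incl_inj _ _ _ _ _ HC).
exists h => s; have [c hc] := subgrmod_incl_onto HC (ex_intro _ s erefl).
by rewrite -hc hh; apply: sel_eq.
Qed.

End CyclicExtension.

Lemma int_reach0 (Z : int -> Prop) :
  (forall i, Z i -> Z (i + 1)) ->
  (forall i, Z i -> exists2 D : nat, (0 < D)%N & Z (i - D%:Z)) ->
  forall i, Z i -> Z 0.
Proof.
move=> up down.
have neg n : Z (- n%:Z) -> Z 0.
  elim: n => [|n IH] h; first by rewrite -oppr0.
  apply: IH; have -> : - n%:Z = - n.+1%:Z + 1 by lia.
  exact: up.
have pos n k : (k <= n)%N -> Z k%:Z -> Z 0.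
  elim: n k => [|n IH] k kn h; first by move: h; rewrite (_ : k = 0%N) //; lia.
  have [D D0 hD] := down _ h.
  have [Dk | kD] := leqP D k.
    apply: (IH (k - D)%N); first by lia.
    by have -> : (k - D)%N%:Z = k%:Z - D%:Z by lia.
  by apply: (neg (D - k)%N); have -> : - (D - k)%N%:Z = k%:Z - D%:Z by lia.
by case=> [n|n]; [apply: pos | rewrite NegzE; apply: neg].
Qed.

Section GradedPrime.
Variables (K : fieldType) (R : algType K) (Rdeg : nat -> R -> Prop).
Hypotheses (Hgr : positively_graded Rdeg) (Hconn : connected Rdeg).
Hypotheses (Hgen : generated_in_degree1 Rdeg) (Hnoeth : noetherian R).
Variable P : R -> Prop.
Hypotheses (HPhom : homogeneous_ideal Rdeg P) (HPprime : prime_ideal P).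
Hypothesis HPneq : ~ (forall a, P a <-> Rplus Rdeg a).

Let Rdeg0 i : Rdeg i 0. Proof. by case: Hgr. Qed.
Let RdegZ i k a : Rdeg i a -> Rdeg i (k *: a).
Proof. by case: Hgr => _ [_ [h _]]; apply: h. Qed.
Let RdegM i j a b : Rdeg i a -> Rdeg j b -> Rdeg (i + j)%N (a * b).
Proof. by case: Hgr => _ [_ [_ [h _]]]; apply: h. Qed.
Let Rdeg01 : Rdeg 0 1.
Proof. by apply/Hconn; exists 1; rewrite scale1r. Qed.

Let P0 : P 0. Proof. by case: HPprime => [[[h _] _] _]. Qed.
Let PD a b : P a -> P b -> P (a + b).
Proof. by case: HPprime => [[[_ [h _]] _] _]; apply: h. Qed.
Let PMr a r : P a -> P (a * r).
Proof. by case: HPprime => [[[_ [_ h]] _] _]; apply: h. Qed.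
Let PMl a r : P a -> P (r * a).
Proof. by case: HPprime => [[_ [_ [_ h]]] _]; apply: h. Qed.
Let PZ k a : P a -> P (k *: a).
Proof. by move=> Pa; rewrite -mulr_algl; apply: PMl. Qed.
Let P_sum (I : Type) (l : seq I) (p : pred I) (F : I -> R) :
  (forall i, p i -> P (F i)) -> P (\sum_(i <- l | p i) F i).
Proof. by move=> hF; apply: big_ind. Qed.
Let P1 : ~ P 1.
Proof.
by case: HPprime => _ [[a nPa] _] P1; apply: nPa; rewrite -(mul1r a); apply: PMr.
Qed.

Lemma prime_mul_homog_notin a b : ~ P a -> ~ P b ->
  exists r i, Rdeg i r /\ ~ P (a * r * b).
Proof.
move=> nPa nPb; apply: contrapT => hn.
pose I c := forall r, P (c * r * b).
pose J d := forall c, I c -> P (c * d).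
have Ia : I a.
  move=> r; have [s [x [_ [dx ->]]]] := Rdeg_decomp Hgr r.
  rewrite mulr_sumr mulr_suml; apply: P_sum => i _.
  by apply: contrapT => h; apply: hn; exists (x i), i; split.
have IMr c r : I c -> I (c * r) by move=> Ic s; move: (Ic (r * s)); rewrite !mulrA.
have hI : two_sided_ideal I.
  do 2!split; do ?split; try by move=> r; rewrite !mul0r.
  - by move=> x y Ix Iy r; rewrite !mulrDl; apply: PD.
  - exact: IMr.
  - by move=> x y Ix Iy r; rewrite !mulrDl; apply: PD.
  - by move=> x r Ix s; rewrite -!mulrA; apply: PMl; rewrite mulrA; apply: Ix.
have hJ : two_sided_ideal J.
  do 2!split; do ?split; try by move=> c _; rewrite mulr0.
  - by move=> x y Jx Jy c Ic; rewrite mulrDr; apply: PD; [apply: Jx | apply: Jy].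
  - by move=> x r Jx c Ic; rewrite mulrA; apply: PMr; apply: Jx.
  - by move=> x y Jx Jy c Ic; rewrite mulrDr; apply: PD; [apply: Jx | apply: Jy].
  - by move=> x r Jx c Ic; rewrite mulrA; apply: Jx; apply: IMr.
case: HPprime => _ [_ prime].
have [IP | JP] := prime I J hI hJ (fun c d Ic Jd => Jd c Ic).
- exact/nPa/IP.
- by apply/nPb/JP => c Ic; move: (Ic 1); rewrite mulr1.
Qed.

Lemma homogeneous_ideal_component i j a b :
  Rdeg i a -> Rdeg j b -> i != j -> P (a + b) -> P a.
Proof.
move=> da db ij Pab; case: HPhom => _ comp.
pose x n := if n == i then a else if n == j then b else 0.
have ji : (j == i) = false by rewrite eq_sym (negbTE ij).
have := comp [:: i; j] x _ _ _ i; rewrite /x eqxx; apply; rewrite ?inE ?eqxx //=.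
- by rewrite inE ij.
- by move=> n; rewrite /x; case: eqP => [-> //|_]; case: eqP => [-> //|_].
- by rewrite big_cons big_seq1 /x eqxx ji eqxx.
Qed.

Lemma prime_sub_Rplus a : P a -> Rplus Rdeg a.
Proof.
move=> Pa; have [s [x [us [dx ea]]]] := Rdeg_decomp Hgr a.
have Px i : i \in s -> P (x i) by case: HPhom => _ comp; apply: comp => //; rewrite -ea.
have x0 : 0%N \in s -> x 0%N = 0.
  move=> s0; have [k xk] := (Hconn (x 0%N)).1 (dx 0%N).
  have [k0 | nk0] := eqVneq k 0; first by rewrite xk k0 scale0r.
  have := PZ k^-1 (Px _ s0); rewrite xk scalerA mulVf // scale1r => /P1 [].
exists [seq i <- s | i != 0%N], x; split; first exact: filter_uniq.
split; first by rewrite mem_filter eqxx.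
split => //; rewrite big_filter ea [LHS](bigID (fun i => i != 0%N)) /=.
by rewrite [X in _ + X]big1_seq ?addr0 // => i /andP [/negPn /eqP -> /x0].
Qed.

Lemma exists_pos_deg_notin : exists z d, (0 < d)%N /\ Rdeg d z /\ ~ P z.
Proof.
have [a nPa Ra] : exists2 a, ~ P a & Rplus Rdeg a.
  apply: contrapT => h; apply: HPneq => a; split; first exact: prime_sub_Rplus.
  by move=> Ra; apply: contrapT => nPa; apply: h; exists a.
case: Ra => s [x [_ [s0 [dx ea]]]].
have [i si nPx] : exists2 i, i \in s & ~ P (x i).
  apply: contrapT => h; apply: nPa; rewrite ea big_seq; apply: P_sum => i si.
  by apply: contrapT => nPx; apply: h; exists i.
exists (x i), i; split => //; rewrite lt0n.
by apply: contraNneq s0 => <-.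
Qed.

Lemma exists_pos_deg_mul_notin a b : ~ P a -> ~ P b ->
  exists v d, (0 < d)%N /\ Rdeg d v /\ ~ P (a * v * b).
Proof.
move=> nPa nPb; have [z [d [d0 [dz nPz]]]] := exists_pos_deg_notin.
have [r1 [i1 [dr1 nP1]]] := prime_mul_homog_notin nPa nPz.
have [r2 [i2 [dr2 nP2]]] := prime_mul_homog_notin nP1 nPb.
exists (r1 * z * r2), (i1 + d + i2)%N; split; first by lia.
by split; [apply: RdegM => //; apply: RdegM | rewrite !mulrA].
Qed.

(* If [R_1 t R] lay in [P], generation in degree 1 would give [R = K + L] for
   the left ideal [L] of all [c] with [c t R] in [P]; a homogeneous [v] of
   positive degree with [v t] outside [P] then contradicts homogeneity of [P]. *)
Lemma exists_deg1_mul_notin t it : Rdeg it t -> ~ P t ->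
  exists y r, Rdeg 1 y /\ ~ P (y * t * r).
Proof.
move=> dt nPt; apply: contrapT => hn.
pose L c := forall r, P (c * t * r).
have LD c1 c2 : L c1 -> L c2 -> L (c1 + c2) by move=> h1 h2 r; rewrite !mulrDl; apply: PD.
have LZ k c : L c -> L (k *: c) by move=> h r; rewrite -!scalerAl; apply: PZ.
have LMl c1 c2 : L c2 -> L (c1 * c2).
  by move=> h r; rewrite -!mulrA; apply: PMl; rewrite !mulrA.
have KL : forall c, exists k : K, L (c - k%:A).
  apply: (Hgen (S := fun c => exists k : K, L (c - k%:A)))
    => [|c1 c2 [k1 h1] [k2 h2]|k c [k1 h1]|c1 c2 [k1 h1] [k2 h2]|y dy].
  - by exists 1; rewrite scale1r subrr => r; rewrite !mul0r.
  - exists (k1 + k2); rewrite scalerDl opprD addrACA; exact: LD.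
  - by exists (k * k1); rewrite -scalerA -scalerBr; apply: LZ.
  - exists (k1 * k2).
    have -> : c1 * c2 - (k1 * k2)%:A = c1 * (c2 - k2%:A) + k2 *: (c1 - k1%:A).
      by rewrite mulrBr mulr_algr scalerBr scalerA [k2 * k1]mulrC addrA subrK.
    by apply: LD; [apply: LMl | apply: LZ].
  - exists 0; rewrite scale0r subr0 => r.
    by apply: contrapT => nP; apply: hn; exists y, r.
have [v [d [d0 [dv]]]] := exists_pos_deg_mul_notin P1 nPt; rewrite mul1r; apply.
have [k Lk] := KL v.
apply: (@homogeneous_ideal_component (d + it)%N it _ ((- k) *: t)).
- exact: RdegM.
- exact: RdegZ.
- by rewrite -{2}[it]add0n eqn_add2r -lt0n.
- by move: (Lk 1); rewrite mulr1 mulrBl mulr_algl scaleNr.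
Qed.

(* The right annihilator of [a] modulo [P] is maximal among those of its
   homogeneous left multiples; otherwise iterating from [1] would produce a
   strictly ascending chain of right ideals. *)
Lemma exists_rann_maximal : exists a i, Rdeg i a /\ ~ P a /\
  forall u j, Rdeg j u -> ~ P (u * a) -> forall s, P (u * a * s) -> P (a * s).
Proof.
apply: contrapT => nomax.
pose T := {a : R | exists i, Rdeg i a /\ ~ P a}.
have step (a : T) : exists b : T,
    (exists u, sval b = u * sval a) /\ exists s, P (sval b * s) /\ ~ P (sval a * s).
  case: a => a [i [da nPa]]; apply: contrapT => hn; apply: nomax.
  exists a, i; split => //; split => // u j du nPua s Puas.
  apply: contrapT => nPas; apply: hn.
  exists (exist _ (u * a) (ex_intro _ (j + i)%N (conj (RdegM du da) nPua))).
  by split; [exists u | exists s].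
have [next hnext] := choice step.
pose a0 : T := exist _ 1 (ex_intro _ 0%N (conj Rdeg01 P1)).
pose a n := sval (iter n next a0).
have rideal n : right_ideal (fun s => P (a n * s)).
  do ?split; first by rewrite mulr0.
  - by move=> x y hx hy; rewrite mulrDr; apply: PD.
  - by move=> x r hx; rewrite mulrA; apply: PMr.
have chain n s : P (a n * s) -> P (a n.+1 * s).
  have [[u eu] _] := hnext (iter n next a0).
  by rewrite /a iterS eu -mulrA; apply: PMl.
have [N HN] := Hnoeth.1 _ rideal chain.
have [_ [s [Ps nPs]]] := hnext (iter N next a0).
exact/nPs/(HN N.+1 (leqnSn N)).
Qed.

Variables (Q : grmod Rdeg) (pi : R -> Q).
Hypothesis Hpi : is_quotient_by P pi.
Variables (E : grmod Rdeg) (iota : grhom Q E 0).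
Hypothesis HE : gr_injective_envelope iota.
Variable M : grmod Rdeg.

Let iota_pi_act a s : gm_act (iota (pi a)) s = iota (pi (a * s)).
Proof. by case: Hpi => _ [piM _]; rewrite -hfunR piM. Qed.
Let iota_pi_deg i a : Rdeg i a -> gm_deg i%:Z (iota (pi a)).
Proof.
case: Hpi => _ [_ [pi_deg _]] da; rewrite -[i%:Z]addr0.
by apply: hfun_deg; apply: pi_deg.
Qed.
Let iota_pi_eq0 a : iota (pi a) = 0 <-> P a.
Proof.
case: Hpi HE => _ [_ [_ [_ pi_eq0]]] [iota_inj _]; rewrite -pi_eq0.
by split=> [h | ->]; [apply: iota_inj; rewrite h | ]; rewrite raddf0.
Qed.
Let iota_pi_sum (I : Type) (l : seq I) (F : I -> R) :
  iota (pi (\sum_(i <- l) F i)) = \sum_(i <- l) iota (pi (F i)).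
Proof.
case: Hpi => piD [_ [_ [_ pi_eq0]]]; have pi0 : pi 0 = 0 by apply/pi_eq0.
by rewrite (big_morph pi piD pi0) raddf_sum.
Qed.

Lemma image_meets_iota k (f : grhom M E k) m0 : f m0 <> 0 ->
  exists t i m, Rdeg i t /\ ~ P t /\ f m = iota (pi t).
Proof.
move=> nz; have [_ [_ ess]] := HE.
have [q [[m fm] q0]] := ess _ (gr_submodule_image f)
  (ex_intro _ (f m0) (conj (ex_intro _ m0 erefl) nz)).
have [a ea] := Hpi.2.2.2.1 q; subst q.
have [s [x [us [dx ea]]]] := Rdeg_decomp Hgr a; subst a.
rewrite iota_pi_sum in fm q0.
have [n sn nz'] : exists2 n, n \in s & iota (pi (x n)) <> 0.
  apply: contrapT => h; apply: q0; rewrite big1_seq // => n sn.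
  by apply: contrapT => nz'; apply: h; exists n.
have inj : {in s &, injective (fun n : nat => n%:Z)} by move=> ? ? _ _ [].
have [m' fm'] := gr_submodule_components (gr_submodule_image f) us inj
  (fun n => iota_pi_deg (dx n)) (ex_intro _ m fm) sn.
by exists (x n), n, m'; split => //; split => // /iota_pi_eq0.
Qed.

Definition hom_nonzero (i : int) := exists (f : grhom M E i) (m : M), f m <> 0.

Lemma hom_nonzero_succ i : hom_nonzero i -> hom_nonzero (i + 1).
Proof.
move=> [f [m0 /image_meets_iota [t [it [m [dt [nPt fm]]]]]]].
have [y [r [dy nPytr]]] := exists_deg1_mul_notin dt nPt.
have ann s : gm_act (iota (pi 1)) s = 0 -> gm_act (iota (pi y)) s = 0.
  by rewrite !iota_pi_act mul1r => /iota_pi_eq0 Ps; apply/iota_pi_eq0/PMl.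
have [_ [HEinj _]] := HE.
have [h hh] := gr_injective_cyclic_extend Hgr HEinj
  (iota_pi_deg Rdeg01) (iota_pi_deg dy) ann.
have -> : i + 1 = i + (1%:Z - 0%:Z) by rewrite subr0.
exists (grhom_comp f h), (gm_act m r).
rewrite /= hfunR fm iota_pi_act -[t * r]mul1r -iota_pi_act hh iota_pi_act mulrA.
by move/iota_pi_eq0.
Qed.

Lemma hom_nonzero_pred i :
  hom_nonzero i -> exists2 D : nat, (0 < D)%N & hom_nonzero (i - D%:Z).
Proof.
move=> [f [m0 /image_meets_iota [t [it [m [dt [nPt fm]]]]]]].
have [a [ia [da [nPa amax]]]] := exists_rann_maximal.
have [v [iv [iv0 [dv nPtva]]]] := exists_pos_deg_mul_notin nPt nPa.
have dtv := RdegM dt dv.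
have ann s : gm_act (iota (pi (t * v * a))) s = 0 -> gm_act (iota (pi a)) s = 0.
  by rewrite !iota_pi_act => /iota_pi_eq0 /(amax _ _ dtv nPtva) /iota_pi_eq0.
have [_ [HEinj _]] := HE.
have [h hh] := gr_injective_cyclic_extend Hgr HEinj
  (iota_pi_deg (RdegM dtv da)) (iota_pi_deg da) ann.
exists (it + iv)%N; first by lia.
have -> : i - (it + iv)%N%:Z = i + (ia%:Z - (it + iv + ia)%N%:Z) by lia.
exists (grhom_comp f h), (gm_act m (v * a)).
rewrite /= hfunR fm iota_pi_act -[t * (v * a)]mulr1 mulrA -iota_pi_act hh.
by rewrite iota_pi_act mulr1; move/iota_pi_eq0.
Qed.

Lemma hom_nonzero_deg0 i : hom_nonzero i -> hom_nonzero 0.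
Proof. exact: int_reach0 hom_nonzero_succ hom_nonzero_pred i. Qed.

End GradedPrime.

Theorem mainTheorem11 (K : fieldType) (R : algType K) (Rdeg : nat -> R -> Prop)
  (Hgr : positively_graded Rdeg) (Hconn : connected Rdeg)
  (Hgen : generated_in_degree1 Rdeg) (Hnoeth : noetherian R)
  (P : R -> Prop) (HPhom : homogeneous_ideal Rdeg P) (HPprime : prime_ideal P)
  (HPneq : ~ (forall a, P a <-> Rplus Rdeg a))
  (Q : grmod Rdeg) (pi : R -> Q) (Hpi : is_quotient_by P pi)
  (E : grmod Rdeg) (iota : grhom Q E 0) (HE : gr_injective_envelope iota)
  (M : grmod Rdeg) :
  GrHom_zero M E <-> HomBar_zero M E.
Proof.
split=> [H0 i f m | H f]; last exact: H.
apply: contrapT => nz.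
have [g [m' nz']] := hom_nonzero_deg0 Hgr Hconn Hgen Hnoeth HPhom HPprime HPneq Hpi HE
  (ex_intro _ f (ex_intro _ m nz)).
exact/nz'/H0.
Qed.
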